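(* Let $P(X,Y,Z)=X+\frac{1}{X}+Y+\frac{1}{Y}+Z+\frac{1}{Z}-2$ and let $D_P=\{(X,Y,Z)\in(\mathbb{C}^\times)^3 : P(X,Y,Z)=0,\ |X|=|Y|=1,\ |Z|>1\}$. The map $(X,Y,Z)\mapsto Z$ defines a fibration of $D_P\setminus\{(-1,-1,3+2\sqrt{2})\}$ above the interval $(1,3+2\sqrt{2})$. The fibres are homeomorphic to $S^1$ and, writing $X=e^{i\phi}$, $Y=e^{i\psi}$, the fibre above $Z$ is given by the implicit equation \[ \cos\phi+\cos\psi = 1-\frac12\Big(Z+\frac1Z\Big). \] *)

From HB Require Import structures.
From mathcomp Require Import all_boot all_order all_algebra.
From mathcomp Require Import all_classical all_reals all_analysis.
From mathcomp Require Export complex.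
Import Order.TTheory GRing.Theory Num.Theory.
Import numFieldNormedType.Exports.

Set Implicit Arguments.
Unset Strict Implicit.
Unset Printing Implicit Defensive.

Local Open Scope ring_scope.
Local Open Scope classical_set_scope.
Local Open Scope complex_scope.

HB.instance Definition _ (R : realType) :=
  PseudoPointedMetric.copy R[i] (R[i])^o.

Definition homeo_via (T1 T2 : topologicalType) (A : set T1) (B : set T2)
  (f : T1 -> T2) (g : T2 -> T1) : Prop :=
  [/\ (forall x, A x -> B (f x)),
      (forall y, B y -> A (g y)),
      (forall x, A x -> g (f x) = x),
      (forall y, B y -> f (g y) = y) &
      {within A, continuous f} /\ {within B, continuous g}].

Definition homeomorphic (T1 T2 : topologicalType) (A : set T1) (B : set T2)
  : Prop := exists f g, @homeo_via T1 T2 A B f g.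

Definition fibre_bundle (T S U : topologicalType) (E : set T) (B : set S)
  (pi : T -> S) (F : set U) : Prop :=
  pi @` E = B /\
  forall b, B b -> exists V : set S, [/\ open V, V b &
    exists (h : T -> S * U) (g : S * U -> T),
      homeo_via (E `&` pi @^-1` V) ((B `&` V) `*` F) h g /\
      (forall x, (E `&` pi @^-1` V) x -> (h x).1 = pi x)].

Section LaurentP.
Variable R : realType.

Definition Pol (X Y Z : R[i]) : R[i] :=
  X + X^-1 + Y + Y^-1 + Z + Z^-1 - 2.

Definition DP : set (R[i] * R[i] * R[i]) :=
  [set p | [/\ p.1.1 != 0, p.1.2 != 0, p.2 != 0,
              Pol p.1.1 p.1.2 p.2 = 0 &
              [/\ `|p.1.1| = 1, `|p.1.2| = 1 & 1 < `|p.2| ] ] ].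

Definition zmax : R := 3 + 2 * Num.sqrt 2.

Definition DP' : set (R[i] * R[i] * R[i]) :=
  DP `\ ((-1, -1), (zmax)%:C).

Definition projZ (p : R[i] * R[i] * R[i]) : R[i] := p.2.

Definition base : set R[i] := [set t%:C | t in `]1, zmax[%classic].

Definition circle : set R[i] := [set z | `|z| = 1].

End LaurentP.

(* On the unit circle X + 1/X = 2 Re X, so on D_P the equation P = 0 forces
   Z + 1/Z to be real, hence Z to be a real number z > 1, and reduces to
   Re X + Re Y = -k with k = (z + 1/z)/2 - 1; moreover k < 2 exactly when
   z < 3 + 2 sqrt 2.  In the half-angle coordinate t = Im X / (1 - Re X) of the
   unit circle one has Re X = 1 - 2/(1 + t^2), and along a ray r (p, q),
   p^2 + q^2 = 1, of the (t1, t2)-plane the equation Re X + Re Y = -k becomes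
   the quadratic (k + 2) (p q)^2 x^2 + k x + (k - 2) = 0 in x = r^2.  For
   0 < k < 2 it has exactly one positive root, depending continuously on k and
   (p, q), so each fibre is a curve meeting every ray once.  Radial projection
   of the half-angle coordinates thus trivializes D_P minus (-1, -1, 3 + 2 sqrt 2)
   over the whole base, with fibre the unit circle. *)

From HB Require Import structures.
From mathcomp Require Import all_boot all_order all_algebra.
From mathcomp Require Import all_classical all_reals all_analysis.
From mathcomp Require Import complex.
From mathcomp Require Import ring lra.
Import Order.TTheory GRing.Theory Num.Theory.
Import numFieldNormedType.Exports.

Set Implicit Arguments.
Unset Strict Implicit.
Unset Printing Implicit Defensive.
Local Open Scope ring_scope.
Local Open Scope classical_set_scope.
Local Open Scope complex_scope.

(* Unqualified, [Re] and [Im] would be the complex-valued [Num.Theory.Re]/[Im]. *)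
Local Notation Re := complex.Re.
Local Notation Im := complex.Im.

Section ComplexContinuity.
Variable R : realType.

Lemma real_complex_continuous : continuous (fun k : R => k%:C : R[i]).
Proof.
move=> x; apply/(@cvgrPdist_lt _ R[i]^o) => e e0.
have [e' -> e'0] : exists2 e' : R, e = e'%:C & 0 < e'.
  by case: e e0 => a b; rewrite ltcE /= => /andP[/eqP -> a0]; exists a.
near=> t; rewrite -rmorphB normc_def /= expr0n addr0 sqrtr_sqr ltcR.
by near: t; exact: cvgr_dist_lt.
Unshelve. all: by end_near. Qed.

Lemma normc_lipschitz_continuous (f : R[i] -> R) :
  (forall x y, `|f x - f y|%:C <= `|x - y|) -> continuous f.
Proof.
move=> fL x; apply/(@cvgrPdist_lt _ _ _ _ (nbhs_filter (x : R[i]^o))) => e e0.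
near=> t; rewrite -ltcR; apply: le_lt_trans (fL _ _) _.
by near: t; apply: (@cvgr_dist_lt _ R[i]^o); [exact: cvg_id | rewrite ltcR].
Unshelve. all: by end_near. Qed.

Lemma Re_continuous : continuous (@Re R).
Proof.
apply: normc_lipschitz_continuous => x y.
by rewrite -raddfB; exact: normc_ge_Re.
Qed.

Lemma Im_continuous : continuous (@Im R).
Proof.
apply: normc_lipschitz_continuous => x y; rewrite -raddfB.
case: (x - y) => a b; rewrite normc_def /= lecR -sqrtr_sqr.
by rewrite ler_wsqrtr // lerDr sqr_ge0.
Qed.

Lemma complex_continuous {T : topologicalType} (f g : T -> R) (x : T) :
  {for x, continuous f} -> {for x, continuous g} ->
  {for x, continuous (fun t => f t +i* g t)}.
Proof.
move=> cf cg.
have fgE t : f t +i* g t = (f t)%:C + 'i * (g t)%:C :> R[i]^o by simpc.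
suff : (fun t => (f t)%:C + 'i * (g t)%:C : R[i]^o) @ x -->
       ((f x)%:C + 'i * (g x)%:C : R[i]^o) by rewrite -(funext fgE) -fgE.
apply: cvgD; last apply: cvgMr.
- apply: (continuous_comp cf); exact: real_complex_continuous.
- apply: (continuous_comp cg); exact: real_complex_continuous.
Qed.

End ComplexContinuity.

Lemma continuous_within_comp {T S V : topologicalType} (A : set T) (B : set S)
    (f : T -> S) (g : S -> V) :
  (forall x, A x -> B (f x)) -> {within A, continuous f} ->
  {within B, continuous g} -> {within A, continuous (g \o f)}.
Proof.
move=> fAB /subspace_continuousP cf /subspace_continuousP cg.
apply/subspace_continuousP => x Ax; apply: cvg_trans (cg _ (fAB _ Ax)).
have fW : f @ within A (nbhs x) --> within B (nbhs (f x)).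
  move=> W nW; apply: filter_app (cf _ Ax _ nW); apply: within_nbhsW => // y Ay.
  by apply; exact: fAB.
exact: (cvg_app g fW).
Qed.

Section TrivialBundle.
Context {T S U : topologicalType}.
Context {E : set T} {B : set S} {proj : T -> S} {F : set U}.
Context {h : T -> S * U} {g : S * U -> T}.
Hypotheses (hg : homeo_via E (B `*` F) h g) (h1 : forall x, E x -> (h x).1 = proj x).

Lemma trivial_fibre_bundle : F !=set0 -> fibre_bundle E B proj F.
Proof.
case: hg => hE gE hK gK _ [y Fy]; split.
  apply/seteqP; split=> [_ [x Ex <-]|b Bb]; first by rewrite -h1 //; case: (hE x Ex).
  have Eg : E (g (b, y)) by exact: gE.
  by exists (g (b, y)) => //; rewrite -h1 // gK.
move=> b _; exists setT; split => //; first exact: openT.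
by exists h, g; rewrite preimage_setT !setIT.
Qed.

Lemma trivial_bundle_fibre_homeomorphic b : B b ->
  homeomorphic (E `&` proj @^-1` [set b]) F.
Proof.
case: hg => hE gE hK gK [hc gc] Bb.
have hbE x : (E `&` proj @^-1` [set b]) x -> h x = (b, (h x).2).
  by case=> Ex /= <-; rewrite -h1 //; case: (h x).
exists (fun x => (h x).2), (fun y => g (b, y)); split.
- by move=> x [Ex _]; case: (hE x Ex).
- move=> y Fy; have Eg : E (g (b, y)) by exact: gE.
  by split => //=; rewrite -h1 // gK.
- by move=> x fx; rewrite -hbE // hK //; case: fx.
- by move=> y Fy; rewrite gK.
split.
  change {within E `&` proj @^-1` [set b], continuous (snd \o h)}.
  apply: (continuous_within_comp (B := [set: S * U])) => //.
    by apply: continuous_subspaceW hc => x [].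
  by apply: continuous_subspaceT => ?; exact: cvg_snd.
change {within F, continuous (g \o pair b)}.
apply: (continuous_within_comp (B := B `*` F)) => //.
by apply: continuous_subspaceT => y; apply: cvg_pair; [exact: cvg_cst|exact: cvg_id].
Qed.

End TrivialBundle.

Section PositiveRoot.
Variable R : rcfType.
Variables (A B C : R).
Hypotheses (A_ge0 : 0 <= A) (B_gt0 : 0 < B) (C_lt0 : C < 0).

(* The quadratic formula with rationalized numerator, which stays valid for A = 0. *)
Definition pos_root : R := - (2 * C) / (B + Num.sqrt (B ^+ 2 - 4 * A * C)).

Let disc_ge0 : 0 <= B ^+ 2 - 4 * A * C.
Proof. by have := sqr_ge0 B; have := mulr_ge0_le0 A_ge0 (ltW C_lt0); lra. Qed.

Let sqrt_disc := Num.sqrt (B ^+ 2 - 4 * A * C).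

Let denom_gt0 : 0 < B + sqrt_disc.
Proof. by rewrite ltr_wpDr ?sqrtr_ge0. Qed.

Lemma pos_root_gt0 : 0 < pos_root.
Proof. by rewrite divr_gt0 // oppr_gt0 pmulr_rlt0. Qed.

Lemma pos_rootP : A * pos_root ^+ 2 + B * pos_root + C = 0.
Proof.
have s2 : sqrt_disc ^+ 2 = B ^+ 2 - 4 * A * C by rewrite sqr_sqrtr.
rewrite /pos_root -/sqrt_disc.
have -> : A * (- (2 * C) / (B + sqrt_disc)) ^+ 2 + B * (- (2 * C) / (B + sqrt_disc)) + C
    = C * (sqrt_disc ^+ 2 - (B ^+ 2 - 4 * A * C)) / (B + sqrt_disc) ^+ 2.
  by field; rewrite gt_eqF.
by rewrite s2 subrr mulr0 mul0r.
Qed.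

Lemma pos_root_unique (x : R) : 0 <= x -> A * x ^+ 2 + B * x + C = 0 -> x = pos_root.
Proof.
move=> x_ge0 root_x.
have lin_gt0 : 0 < 2 * A * x + B by have := B_gt0; have := mulr_ge0 A_ge0 x_ge0; lra.
have discE : B ^+ 2 - 4 * A * C = (2 * A * x + B) ^+ 2.
  by apply/eqP; rewrite -subr_eq0 -(mulr0 (-4 * A)) -root_x; apply/eqP; ring.
rewrite /pos_root discE sqrtr_sqr ger0_norm ?ltW //.
have -> : - (2 * C) = x * (B + (2 * A * x + B)).
  by apply/eqP; rewrite -subr_eq0 -(mulr0 (-2)) -root_x; apply/eqP; ring.
by rewrite mulfK // gt_eqF // addr_gt0.
Qed.

End PositiveRoot.

Section Stereographic.
Variable R : rcfType.

Lemma normc_eq1 (X : R[i]) : (`|X| = 1) <-> (Re X ^+ 2 + Im X ^+ 2 = 1).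
Proof.
rewrite normc_def; split => [/(congr1 (@complex.Re R)) /= X1|->]; last by rewrite sqrtr1.
by rewrite -[LHS]sqr_sqrtr ?addr_ge0 ?sqr_ge0 // X1 expr1n.
Qed.

Lemma normc_gt1 (X : R[i]) : (1 < `|X|) = (1 < Re X ^+ 2 + Im X ^+ 2).
Proof. by rewrite normc_def ltcR !ltNge -[X in _ <= X]sqrtr1 ler_sqrt. Qed.

Lemma normc_eq1_Re_bounds (X : R[i]) : `|X| = 1 -> -1 <= Re X <= 1.
Proof. by move/normc_eq1 => X1; apply/andP; split; nra. Qed.

Lemma normc_eq1_ReN1 (X : R[i]) : `|X| = 1 -> Re X = -1 -> X = -1.
Proof.
case: X => a b /normc_eq1 /= ab1 aN1.
have b0 : b = 0 by apply/eqP; rewrite -sqrf_eq0; apply/eqP; move: ab1; rewrite aN1; lra.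
by apply/eqP; rewrite eq_complex /= aN1 b0 oppr0 !eqxx.
Qed.

(* [stereo (cos phi +i* sin phi) = cot (phi / 2)]: stereographic projection of
   the unit circle from 1 onto the real line. *)
Definition stereo (X : R[i]) : R := Im X / (1 - Re X).

Definition stereo_inv (t : R) : R[i] :=
  ((t ^+ 2 - 1) / (t ^+ 2 + 1)) +i* (2 * t / (t ^+ 2 + 1)).

Let sqr_add1_gt0 (t : R) : 0 < t ^+ 2 + 1.
Proof. by rewrite ltr_wpDl ?sqr_ge0. Qed.

Lemma Re_stereo_inv (t : R) : Re (stereo_inv t) = 1 - 2 / (t ^+ 2 + 1).
Proof. by rewrite /=; field; rewrite gt_eqF. Qed.

Lemma normc_stereo_inv (t : R) : `|stereo_inv t| = 1.
Proof. by apply/normc_eq1 => /=; field; rewrite gt_eqF. Qed.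

Lemma stereo_invK : cancel stereo_inv stereo.
Proof.
move=> t; rewrite /stereo /=; have := sqr_add1_gt0 t => t_gt0.
have -> : 1 - (t ^+ 2 - 1) / (t ^+ 2 + 1) = 2 / (t ^+ 2 + 1) by field; rewrite gt_eqF.
by field; rewrite gt_eqF.
Qed.

Lemma stereoK (X : R[i]) : `|X| = 1 -> Re X != 1 -> stereo_inv (stereo X) = X.
Proof.
case: X => a b /normc_eq1 /= ab1 a_neq1; rewrite /stereo /=.
have a1 : 1 - a != 0 by rewrite subr_eq0 eq_sym.
have b2 : b ^+ 2 = (1 - a) * (1 + a) by lra.
have two : 1 + a + (1 - a) = 2 :> R by ring.
by rewrite /stereo_inv expr_div_n b2; congr (_ +i* _); field; rewrite a1 two pnatr_eq0.
Qed.

Lemma stereo_inv_radial (k r p q : R) : p ^+ 2 + q ^+ 2 = 1 ->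
  Re (stereo_inv (r * p)) + Re (stereo_inv (r * q)) + k =
  ((k + 2) * (p * q) ^+ 2 * (r ^+ 2) ^+ 2 + k * r ^+ 2 + (k - 2)) /
  (((r * p) ^+ 2 + 1) * ((r * q) ^+ 2 + 1)).
Proof.
move=> pq1; have q2 : q ^+ 2 = 1 - p ^+ 2 by lra.
have := sqr_add1_gt0 (r * p); have := sqr_add1_gt0 (r * q).
rewrite !Re_stereo_inv !exprMn q2 => rq_gt0 rp_gt0.
by field; rewrite !gt_eqF.
Qed.

End Stereographic.

Section UnitDirection.
Variable R : rcfType.

Definition unit_dir (u v : R) : R[i] :=
  (u / Num.sqrt (u ^+ 2 + v ^+ 2)) +i* (v / Num.sqrt (u ^+ 2 + v ^+ 2)).

Lemma unit_dir_polar (u v : R) : 0 < u ^+ 2 + v ^+ 2 ->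
  let n := Num.sqrt (u ^+ 2 + v ^+ 2) in
  [/\ Re (unit_dir u v) ^+ 2 + Im (unit_dir u v) ^+ 2 = 1,
      n * Re (unit_dir u v) = u & n * Im (unit_dir u v) = v].
Proof.
move=> uv_gt0 n; have n_gt0 : 0 < n by rewrite sqrtr_gt0.
split; rewrite /=; last 2 first.
- by rewrite mulrC divfK ?gt_eqF.
- by rewrite mulrC divfK ?gt_eqF.
by rewrite !expr_div_n -mulrDl sqr_sqrtr ?divff ?gt_eqF // ltW.
Qed.

Lemma unit_dir_scale (r p q : R) : 0 < r -> p ^+ 2 + q ^+ 2 = 1 ->
  unit_dir (r * p) (r * q) = p +i* q.
Proof.
move=> r_gt0 pq1; rewrite /unit_dir !exprMn -mulrDr pq1 mulr1 sqrtr_sqr gtr0_norm //.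
by rewrite ![r * _]mulrC !mulfK ?gt_eqF.
Qed.

End UnitDirection.

Section LevelCurve.
Variable R : rcfType.
Variable k : R.
Hypothesis k_bounds : 0 < k < 2.

Definition level_curve : set (R[i] * R[i]) :=
  [set XY | [/\ `|XY.1| = 1, `|XY.2| = 1 & Re XY.1 + Re XY.2 = - k]].

Lemma level_radial (r p q : R) : p ^+ 2 + q ^+ 2 = 1 -> 0 <= r ->
  Re (stereo_inv (r * p)) + Re (stereo_inv (r * q)) = - k <->
  r ^+ 2 = pos_root ((k + 2) * (p * q) ^+ 2) k (k - 2).
Proof.
case/andP: k_bounds => k_gt0 k_lt2 pq1 r_ge0.
have A_ge0 : 0 <= (k + 2) * (p * q) ^+ 2 by rewrite mulr_ge0 ?sqr_ge0 //; lra.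
have C_lt0 : k - 2 < 0 by lra.
move: (stereo_inv_radial k r pq1).
set S := Re _ + Re _; set Q := _ + (k - 2); set D := (_ ^+ 2 + 1) * _ => SE.
have D_gt0 : 0 < D by apply: mulr_gt0; rewrite ltr_wpDl ?sqr_ge0.
apply: (@iff_trans _ (Q = 0)); split => [Sk|Q0].
- move: SE; rewrite Sk addNr => /esym/eqP.
  by rewrite mulf_eq0 invr_eq0 (gt_eqF D_gt0) orbF => /eqP.
- by apply/eqP; rewrite -subr_eq0 opprK SE Q0 mul0r.
- by apply: pos_root_unique; rewrite ?sqr_ge0.
- by rewrite /Q Q0 pos_rootP.
Qed.

Lemma level_Re_neq1 XY : level_curve XY -> Re XY.1 != 1 /\ Re XY.2 != 1.
Proof.
case: XY => X Y [/normc_eq1_Re_bounds/andP[X_ge X_le] /normc_eq1_Re_bounds/andP[Y_ge Y_le]].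
by case/andP: k_bounds => k_gt0 _ /= XYk; split; apply/eqP => eq1; lra.
Qed.

Lemma level_stereo_neq0 XY : level_curve XY -> 0 < stereo XY.1 ^+ 2 + stereo XY.2 ^+ 2.
Proof.
case: XY => X Y XYk; have [X_neq1 Y_neq1] := level_Re_neq1 XYk.
case: XYk => /= X1 Y1 XYk.
rewrite lt_def addr_ge0 ?sqr_ge0 // andbT paddr_eq0 ?sqr_ge0 // !sqrf_eq0.
apply: contraTN isT => /andP[/eqP X0 /eqP Y0].
have stereo0 (Z : R[i]) : `|Z| = 1 -> Re Z != 1 -> stereo Z = 0 -> Re Z = -1.
  move=> Z1 Z_neq1 Z0; rewrite -(stereoK Z1 Z_neq1) Z0 Re_stereo_inv.
  by rewrite expr0n add0r divr1; ring.
move: XYk; rewrite (stereo0 X) // (stereo0 Y) //.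
by case/andP: k_bounds => _ k_lt2; lra.
Qed.

Definition level_radius (w : R[i]) : R :=
  Num.sqrt (pos_root ((k + 2) * (Re w * Im w) ^+ 2) k (k - 2)).

Definition circle_to_level (w : R[i]) : R[i] * R[i] :=
  (stereo_inv (level_radius w * Re w), stereo_inv (level_radius w * Im w)).

Definition level_to_circle (XY : R[i] * R[i]) : R[i] :=
  unit_dir (stereo XY.1) (stereo XY.2).

Lemma level_to_circle_in XY : level_curve XY -> `|level_to_circle XY| = 1.
Proof.
by move=> /level_stereo_neq0 uv_gt0; apply/normc_eq1; case: (unit_dir_polar uv_gt0).
Qed.

Let pos_root_level_gt0 (w : R[i]) :
  0 < pos_root ((k + 2) * (Re w * Im w) ^+ 2) k (k - 2).
Proof.
case/andP: k_bounds => k_gt0 k_lt2.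
by apply: pos_root_gt0; rewrite ?mulr_ge0 ?sqr_ge0 //; lra.
Qed.

Lemma circle_to_level_in w : `|w| = 1 -> level_curve (circle_to_level w).
Proof.
move=> /normc_eq1 w1; split; rewrite ?normc_stereo_inv //=.
apply/level_radial; rewrite ?sqrtr_ge0 // sqr_sqrtr //.
exact: ltW (pos_root_level_gt0 w).
Qed.

Lemma circle_to_levelK w : `|w| = 1 -> level_to_circle (circle_to_level w) = w.
Proof.
move=> /normc_eq1 w1; rewrite /level_to_circle /= !stereo_invK.
by rewrite unit_dir_scale ?sqrtr_gt0 //; case: w w1.
Qed.

Lemma level_to_circleK XY : level_curve XY -> circle_to_level (level_to_circle XY) = XY.
Proof.
case: XY => X Y XYk; have /= [X_neq1 Y_neq1] := level_Re_neq1 XYk.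
have /= uv_gt0 := level_stereo_neq0 XYk; case: XYk => /= X1 Y1 XYk.
rewrite /circle_to_level /level_to_circle /=.
set u := stereo X in uv_gt0 *; set v := stereo Y in uv_gt0 *.
have [w1 uE vE] := unit_dir_polar uv_gt0.
suff -> : level_radius (unit_dir u v) = Num.sqrt (u ^+ 2 + v ^+ 2).
  by rewrite uE vE /u /v !stereoK.
rewrite /level_radius; congr Num.sqrt; rewrite -[RHS]sqr_sqrtr ?ltW //; symmetry.
apply/level_radial => //.
by rewrite uE vE /u /v !stereoK.
Qed.

End LevelCurve.

Section ContinuityLemmas.
Variable R : realType.

Lemma stereo_continuous (X : R[i]) : Re X != 1 -> {for X, continuous (@stereo R)}.
Proof.
move=> X_neq1; apply: (@cvgM _ _ (nbhs X)); first exact: Im_continuous.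
apply: cvgV; first by rewrite subr_eq0 eq_sym.
by apply: cvgB; [exact: cvg_cst | exact: Re_continuous].
Qed.

Lemma stereo_inv_continuous : continuous (@stereo_inv R).
Proof.
move=> t; have t_neq0 : t ^+ 2 + 1 != 0 by rewrite gt_eqF // ltr_wpDl ?sqr_ge0.
have sq_cont : {for t, continuous (fun s : R => s ^+ 2)} by exact: exprn_continuous.
have den : {for t, continuous (fun s : R => (s ^+ 2 + 1)^-1)}.
  by apply: cvgV => //; exact: cvgD sq_cont (cvg_cst _).
have re : {for t, continuous (fun s : R => (s ^+ 2 - 1) / (s ^+ 2 + 1))}.
  by apply: cvgM den; exact: cvgB sq_cont (cvg_cst _).
have im : {for t, continuous (fun s : R => 2 * s / (s ^+ 2 + 1))}.
  by apply: cvgM den; exact: cvgM (cvg_cst _) cvg_id.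
exact: complex_continuous re im.
Qed.

Context {T : topologicalType}.
Implicit Types (f g : T -> R) (x : T).

Lemma unit_dir_continuous f g x : 0 < f x ^+ 2 + g x ^+ 2 ->
  {for x, continuous f} -> {for x, continuous g} ->
  {for x, continuous (fun t => unit_dir (f t) (g t))}.
Proof.
move=> fg_gt0 cf cg.
have cn : {for x, continuous (fun t => Num.sqrt (f t ^+ 2 + g t ^+ 2))}.
  apply: (continuous_comp (f := fun t => f t ^+ 2 + g t ^+ 2)).
    by apply: cvgD; apply: cvgM.
  exact: sqrt_continuous.
have n_neq0 : Num.sqrt (f x ^+ 2 + g x ^+ 2) != 0 by rewrite gt_eqF ?sqrtr_gt0.
by apply: complex_continuous; apply: cvgM => //; apply: cvgV.
Qed.

Lemma pos_root_continuous (a b c : T -> R) x : 0 < b x ->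
  {for x, continuous a} -> {for x, continuous b} -> {for x, continuous c} ->
  {for x, continuous (fun t => pos_root (a t) (b t) (c t))}.
Proof.
move=> b_gt0 ca cb cc.
have cs : {for x, continuous (fun t => Num.sqrt (b t ^+ 2 - 4 * a t * c t))}.
  apply: (continuous_comp (f := fun t => b t ^+ 2 - 4 * a t * c t)).
    by apply: cvgB; [apply: cvgM | apply: cvgM; [apply: cvgM; first exact: cvg_cst|]].
  exact: sqrt_continuous.
apply: cvgM; first by apply: cvgN; apply: cvgM; [exact: cvg_cst | exact: cc].
apply: cvgV; last exact: cvgD cb cs.
by rewrite gt_eqF // ltr_wpDr ?sqrtr_ge0.
Qed.

Lemma circle_to_level_continuous (kf : T -> R) (wf : T -> R[i]) x : 0 < kf x ->
  {for x, continuous kf} -> {for x, continuous wf} ->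
  {for x, continuous (fun t => circle_to_level (kf t) (wf t))}.
Proof.
move=> k_gt0 ck cw.
have cRe : {for x, continuous (fun t => Re (wf t))}.
  by apply: continuous_comp cw _; exact: Re_continuous.
have cIm : {for x, continuous (fun t => Im (wf t))}.
  by apply: continuous_comp cw _; exact: Im_continuous.
have cr : {for x, continuous (fun t => level_radius (kf t) (wf t))}.
  apply: (continuous_comp (f := fun t => pos_root ((kf t + 2) * (Re (wf t) * Im (wf t)) ^+ 2)
                                               (kf t) (kf t - 2))); last exact: sqrt_continuous.
  apply: pos_root_continuous => //; last by apply: cvgB ck (cvg_cst _).
  by apply: cvgM; [apply: cvgD ck (cvg_cst _) | apply: cvgM; apply: cvgM].
have c1 : {for x, continuous (fun t => stereo_inv (level_radius (kf t) (wf t) * Re (wf t)))}.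
  by apply: (continuous_comp (cvgM cr cRe)); exact: stereo_inv_continuous.
have c2 : {for x, continuous (fun t => stereo_inv (level_radius (kf t) (wf t) * Im (wf t)))}.
  by apply: (continuous_comp (cvgM cr cIm)); exact: stereo_inv_continuous.
exact: cvg_pair c1 c2.
Qed.

End ContinuityLemmas.

Lemma level_to_circle_continuous {R : realType} (k : R) XY : 0 < k < 2 -> level_curve k XY ->
  {for XY, continuous (@level_to_circle R)}.
Proof.
move=> k_bounds XYk; have [X_neq1 Y_neq1] := level_Re_neq1 k_bounds XYk.
rewrite /level_to_circle; apply: unit_dir_continuous; first exact: level_stereo_neq0 XYk.
- by apply: continuous_comp; [exact: cvg_fst | exact: stereo_continuous].
- by apply: continuous_comp; [exact: cvg_snd | exact: stereo_continuous].
Qed.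

Section LaurentP.
Variable R : realType.

Definition depth (z : R) : R := (z + z^-1) / 2 - 1.

Lemma depth_gt0 (z : R) : 1 < z -> 0 < depth z.
Proof.
move=> z_gt1; have z_gt0 : 0 < z by lra.
have -> : depth z = (z - 1) ^+ 2 / (2 * z) by rewrite /depth; field; rewrite gt_eqF.
by apply: divr_gt0; [apply: exprn_gt0 | apply: mulr_gt0]; lra.
Qed.

Let sqrt2_gt1 : 1 < Num.sqrt (2 : R).
Proof. by rewrite -[X in X < _]sqrtr1 ltr_sqrt; lra. Qed.

Lemma depth_sub2 (z : R) : z != 0 ->
  depth z - 2 = (z - zmax R) * ((z - (3 - 2 * Num.sqrt 2)) / (2 * z)).
Proof.
move=> z_neq0; have s2 : Num.sqrt (2 : R) ^+ 2 = 2 by rewrite sqr_sqrtr.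
rewrite mulrA.
have -> : (z - zmax R) * (z - (3 - 2 * Num.sqrt 2)) = z ^+ 2 - 6 * z + 1.
  transitivity ((z - 3) ^+ 2 - 4 * Num.sqrt 2 ^+ 2); first by rewrite /zmax; ring.
  by rewrite s2; ring.
by rewrite /depth; field.
Qed.

Let depth_sub2_sign (z : R) : 1 < z -> 0 < (z - (3 - 2 * Num.sqrt 2)) / (2 * z).
Proof. by move=> z_gt1; apply: divr_gt0; have := sqrt2_gt1; lra. Qed.

Lemma depth_lt2 (z : R) : 1 < z -> (depth z < 2) = (z < zmax R).
Proof.
move=> z_gt1; rewrite -subr_lt0 depth_sub2 ?gt_eqF //; last by lra.
by rewrite pmulr_llt0 ?depth_sub2_sign // subr_lt0.
Qed.

Lemma depth_le2 (z : R) : 1 < z -> (depth z <= 2) = (z <= zmax R).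
Proof.
move=> z_gt1; rewrite -subr_le0 depth_sub2 ?gt_eqF //; last by lra.
by rewrite pmulr_lle0 ?depth_sub2_sign // subr_le0.
Qed.

Lemma depth_continuous (z : R) : z != 0 -> {for z, continuous depth}.
Proof.
move=> z_neq0; apply: cvgB (cvg_cst _); apply: cvgM (cvg_cst _).
by apply: cvgD cvg_id _; exact: cvgV.
Qed.

Lemma unit_add_inv (X : R[i]) : `|X| = 1 -> X + X^-1 = (2 * Re X)%:C.
Proof.
case: X => a b /normc_eq1 /= ab1.
have -> : (a +i* b)^-1 = (a / (a ^+ 2 + b ^+ 2)) +i* (- (b / (a ^+ 2 + b ^+ 2))) by [].
by rewrite ab1 !divr1; apply/eqP; rewrite eq_complex /= subrr eqxx andbT; apply/eqP; ring.
Qed.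

Lemma Pol_unit (X Y Z : R[i]) : `|X| = 1 -> `|Y| = 1 ->
  Pol X Y Z = Z + Z^-1 - (2 - 2 * (Re X + Re Y))%:C.
Proof.
move=> /unit_add_inv X1 /unit_add_inv Y1.
have -> : (2 - 2 * (Re X + Re Y))%:C = 2 - (2 * Re X)%:C - (2 * Re Y)%:C :> R[i].
  by rewrite !rmorphB !rmorphM !rmorphD rmorph1; ring.
by rewrite -X1 -Y1 /Pol; ring.
Qed.

Lemma Im_add_inv_real (Z : R[i]) (s : R) : 1 < `|Z| -> Z + Z^-1 = s%:C -> Im Z = 0.
Proof.
case: Z => x y; rewrite normc_gt1 /= => n_gt1 /(congr1 (@complex.Im R)) /=.
have -> : y + - (y / (x ^+ 2 + y ^+ 2)) = y * (x ^+ 2 + y ^+ 2 - 1) / (x ^+ 2 + y ^+ 2).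
  by field; rewrite gt_eqF //; lra.
have n_neq1 : (x ^+ 2 + y ^+ 2 == 1) = false by rewrite gt_eqF.
have n_neq0 : (x ^+ 2 + y ^+ 2 == 0) = false by rewrite gt_eqF //; lra.
by move/eqP; rewrite !mulf_eq0 invr_eq0 subr_eq0 n_neq1 n_neq0 !orbF => /eqP.
Qed.

Lemma gt1_of_add_inv_ge (z : R) : 1 < z ^+ 2 -> -2 <= z + z^-1 -> 1 < z.
Proof.
move=> z2_gt1 sum_ge; rewrite ltNge; apply/negP => z_le1.
have z_ltN1 : z < -1 by nra.
have z_neq0 : z != 0 by rewrite lt_eqF //; lra.
have sq_gt0 : 0 < (z + 1) ^+ 2 by nra.
have : (z + 1) ^+ 2 / z < 0 by rewrite pmulr_rlt0 // invr_lt0; lra.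
have -> : (z + 1) ^+ 2 / z = z + z^-1 + 2 by field.
lra.
Qed.

Lemma DPE : @DP R = [set p | exists2 z, 1 < z & p.2 = z%:C /\ level_curve (depth z) p.1].
Proof.
apply/seteqP; split => [[[X Y] Z] [/= _ _ _ + [X1 Y1 Z1]] | [[X Y] Z] /= [z z_gt1 [-> [X1 Y1 XYk]]]].
  rewrite Pol_unit // => /eqP; rewrite subr_eq0 => /eqP ZE.
  have Zz : Z = (Re Z)%:C by case: Z {Z1 ZE} (Im_add_inv_real Z1 ZE) => x y /= ->.
  move: Z1 ZE; rewrite Zz normc_gt1 /= expr0n addr0 -fmorphV -rmorphD => z2_gt1 /complexI zE.
  have := normc_eq1_Re_bounds X1; have := normc_eq1_Re_bounds Y1.
  move=> /andP[? ?] /andP[? ?].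
  have z_gt1 : 1 < Re Z by apply: gt1_of_add_inv_ge; lra.
  by exists (Re Z) => //; split => //; split => //=; rewrite /depth; lra.
have z_neq0 : z != 0 by rewrite gt_eqF //; lra.
have unit_neq0 (W : R[i]) : `|W| = 1 -> W != 0 by move=> W1; rewrite -normr_eq0 W1 oner_eq0.
split; rewrite /= ?fmorph_eq0 ?unit_neq0 //.
  rewrite Pol_unit // XYk -fmorphV -rmorphD -rmorphB; apply/eqP; rewrite fmorph_eq0.
  by apply/eqP; rewrite /depth; field.
by split => //; rewrite normc_gt1 /= expr0n addr0; nra.
Qed.

Lemma DP'E : @DP' R = [set p | @base R p.2 /\ level_curve (depth (Re p.2)) p.1].
Proof.
rewrite /DP' DPE; apply/seteqP; split.
  move=> [[X Y] _] [[z z_gt1 [/= -> XYk]] not_pt]; split => //.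
  exists z => //; rewrite /= in_itv /= z_gt1 /=.
  case: XYk => /= X1 Y1 XYk.
  have /andP[X_ge _] := normc_eq1_Re_bounds X1.
  have /andP[Y_ge _] := normc_eq1_Re_bounds Y1.
  have depth_le : depth z <= 2 by lra.
  rewrite lt_neqAle -depth_le2 // depth_le andbT; apply/eqP => z_max; apply: not_pt.
  have : depth z - 2 = 0 by rewrite depth_sub2 ?z_max ?subrr ?mul0r // gt_eqF //; lra.
  move=> depth2; have XN1 : Re X = -1 by lra.
  have YN1 : Re Y = -1 by lra.
  by rewrite /= (normc_eq1_ReN1 X1 XN1) (normc_eq1_ReN1 Y1 YN1) z_max.
move=> [[X Y] _] [/= [z + <-] XYk]; rewrite /= in_itv /= in XYk * => /andP[z_gt1 z_lt].
split; first by exists z.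
by case=> _ _ z_max; move: z_lt; rewrite z_max ltxx.
Qed.

Lemma normc_eq1_cos_sin (X : R[i]) : `|X| = 1 <-> exists phi, X = cos phi +i* sin phi.
Proof.
split => [|[phi ->]]; last by apply/normc_eq1; rewrite /= cos2Dsin2.
case: X => a b /normc_eq1 /= ab1.
have a_bounds : -1 <= a <= 1 by apply/andP; split; nra.
have sinE : Num.sqrt (1 - a ^+ 2) = `|b| by rewrite -sqrtr_sqr; congr Num.sqrt; lra.
have cosK : cos (acos a) = a by rewrite acosK // in_itv.
case: (lerP 0 b) => b_sign; [exists (acos a) | exists (- acos a)].
  by rewrite sin_acos // sinE ger0_norm // cosK.
by rewrite cosN sinN sin_acos // sinE ltr0_norm // opprK cosK.
Qed.

Lemma base_Re (Z : R[i]) : @base R Z -> 1 < Re Z < zmax R.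
Proof. by case=> z; rewrite /= in_itv => + <-. Qed.

Lemma base_depth (Z : R[i]) : @base R Z -> 0 < depth (Re Z) < 2.
Proof. by move/base_Re/andP => [z_gt1 z_lt]; rewrite depth_gt0 // depth_lt2. Qed.

Definition trivialize (p : R[i] * R[i] * R[i]) : R[i] * R[i] :=
  (p.2, level_to_circle p.1).

Definition untrivialize (q : R[i] * R[i]) : R[i] * R[i] * R[i] :=
  (circle_to_level (depth (Re q.1)) q.2, q.1).

Lemma trivialize_continuous p : @DP' R p -> {for p, continuous trivialize}.
Proof.
rewrite DP'E => -[bZ pk].
have c1 : {for p, continuous (fun p : R[i] * R[i] * R[i] => p.2)} by exact: cvg_snd.
have c2 : {for p, continuous (fun p : R[i] * R[i] * R[i] => level_to_circle p.1)}.
  apply: (continuous_comp (f := fst)); first exact: cvg_fst.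
  exact: (level_to_circle_continuous (base_depth bZ) pk).
exact: cvg_pair c1 c2.
Qed.

Lemma untrivialize_continuous q : @base R q.1 -> {for q, continuous untrivialize}.
Proof.
move=> bZ; have /andP[k_gt0 _] := base_depth bZ.
have Re_neq0 : Re q.1 != 0 by have /andP[z_gt1 _] := base_Re bZ; rewrite gt_eqF //; lra.
have ck : {for q, continuous (fun q : R[i] * R[i] => depth (Re q.1))}.
  apply: continuous_comp; last exact: (depth_continuous Re_neq0).
  by apply: continuous_comp; [exact: cvg_fst | exact: Re_continuous].
have c1 : {for q, continuous (fun q => circle_to_level (depth (Re q.1)) q.2)}.
  by apply: circle_to_level_continuous => //; exact: cvg_snd.
have c2 : {for q, continuous (fun q : R[i] * R[i] => q.1)} by exact: cvg_fst.
exact: cvg_pair c1 c2.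
Qed.

Lemma DP'_trivialization :
  homeo_via (@DP' R) (@base R `*` @circle R) trivialize untrivialize.
Proof.
split; last split.
- move=> p; rewrite DP'E => -[bZ pk]; split => //=.
  exact: (level_to_circle_in (base_depth bZ) pk).
- move=> [Z w] [/= bZ w1]; rewrite DP'E; split => //=.
  exact: (circle_to_level_in (base_depth bZ) w1).
- by move=> [XY Z]; rewrite DP'E => -[/= bZ XYk]; rewrite /untrivialize /= level_to_circleK // base_depth.
- by move=> [Z w] [/= bZ w1]; rewrite /trivialize /= circle_to_levelK // base_depth.
- by apply: continuous_in_subspaceT => p; rewrite inE; exact: trivialize_continuous.
- by apply: continuous_in_subspaceT => q; rewrite inE => -[bZ _]; exact: untrivialize_continuous.
Qed.

Lemma DP'_fibreE (z : R) : 1 < z < zmax R ->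
  @DP' R `&` @projZ R @^-1` [set z%:C] =
  [set p | p.2 = z%:C /\ exists phi psi : R,
     [/\ p.1.1 = cos phi +i* sin phi, p.1.2 = cos psi +i* sin psi &
         cos phi + cos psi = 1 - (z + z^-1) / 2]].
Proof.
move=> z_bounds; rewrite DP'E; apply/seteqP; split.
  move=> [[X Y] Z] [[_ [/= X1 Y1 XYk]] /= Zz]; subst Z; split => //.
  move: XYk; rewrite /depth /= => XYk.
  have [phi XE] := (normc_eq1_cos_sin X).1 X1; have [psi YE] := (normc_eq1_cos_sin Y).1 Y1.
  by exists phi, psi; split => //; move: XYk; rewrite XE YE /=; lra.
move=> [[X Y] Z] [/= Zz [phi [psi [XE YE sum]]]]; subst Z; split => //; split => /=.
  by exists z => //; rewrite /= in_itv.
split => /=; first by apply/normc_eq1_cos_sin; exists phi.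
  by apply/normc_eq1_cos_sin; exists psi.
by rewrite XE YE /depth /=; lra.
Qed.

End LaurentP.

Theorem lemma2p3 (R : realType) :
  fibre_bundle (@DP' R) (@base R) (@projZ R) (@circle R) /\
  (forall z : R, 1 < z < @zmax R ->
     homeomorphic (@DP' R `&` @projZ R @^-1` [set z%:C]) (@circle R)) /\
  (forall z : R, 1 < z < @zmax R ->
     @DP' R `&` @projZ R @^-1` [set z%:C] =
     [set p | p.2 = z%:C /\
        exists phi psi : R,
          [/\ p.1.1 = (cos phi +i* sin phi), p.1.2 = (cos psi +i* sin psi) &
              cos phi + cos psi = 1 - (z + z^-1) / 2]]).
Proof.
have trivial := DP'_trivialization R.
have trivial_fst p : @DP' R p -> (trivialize p).1 = projZ p by [].
split; first by apply: (trivial_fibre_bundle trivial trivial_fst); exists 1; exact: normr1.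
split => z z_bounds; last exact: DP'_fibreE.
by apply: (trivial_bundle_fibre_homeomorphic trivial trivial_fst); exists z; rewrite //= in_itv.
Qed.
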